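(* Let $\sigma$ be a signature containing $\triangleright$, let $\mathcal{A}$ be a $\sigma$-algebra and let $\theta$ be a representation of $\mathcal{A}$ by partial functions. Then $\theta$ is atomic if and only if $\theta$ is locally complete.
   Context: Signatures $\sigma$ are sets of operation symbols drawn from: $\triangleright$ (antidomain restriction), $;$ (composition), $\wedge$ (intersection), $\mathrm{upd}$ (update), $\sqcup$ (preferential union), $\mathsf{D}$ (domain), $\mathsf{A}$ (antidomain), interpreted on partial functions as: $f \triangleright g = \{(x,y) \in g : x \notin \mathrm{dom}(f)\}$; $f;g$ = relational composition ($f$ first); $f\wedge g = f\cap g$; $\mathrm{upd}(f,g)(x)$ is $f(x)$ if $f(x)$ defined and $g(x)$ undefined, $g(x)$ if both defined, undefined otherwise; $(f\sqcup g)(x)$ is $f(x)$ if defined, else $g(x)$; $\mathsf{D}(f)$ = identity on $\mathrm{dom}(f)$; $\mathsf{A}(f)$ = identity on the complement of $\mathrm{dom}(f)$ in the base. A representation by partial functions is an isomorphism onto a $\sigma$-algebra of partial functions with these operations. Define $0 := a\triangleright a$, $a\lhd b := (a\triangleright b)\triangleright b$, $a \le b :\iff a\lhd b = a$; for representable algebras this is a partial order with least element $0$ and $a\le b \iff \theta(a)\subseteq\theta(b)$. An atom is a minimal nonzero element; $\mathrm{At}(\mathcal{A})$ is the set of atoms. $\theta$ is atomic if whenever $(x,y)\in\theta(a)$ there is an atom $b\le a$ with $(x,y)\in\theta(b)$. For $a\in\mathcal{A}$, ${\downarrow}a=\{b:b\le a\}$ is a Boolean algebra with bottom $0$, top $a$,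 meet $\lhd$ and complement $b\mapsto b\triangleright a$, and $\theta$ restricts to a representation of it as a field of sets over $\theta(a)$; $\theta$ is locally complete if for every $a$ this restriction is complete (sends every existing join to the union and every existing meet of a nonempty set to the intersection). *)

(* Partial functions on a base set X are modelled as X -> option X;
   the pair (x,y) belongs to f iff f x = Some y. *)

Inductive sym : Type :=
  | SRes
  | SComp
  | SMeet
  | SUpd
  | SPref
  | SD
  | SA.

(* Only the
   symbols in sigma matter (representations only have to respect those);
   interpretations of symbols outside sigma are arbitrary and never used. *)
Record alg : Type := Alg {
  car  :> Type;
  ores  : car -> car -> car;
  ocomp : car -> car -> car;
  omeet : car -> car -> car;
  oupd  : car -> car -> car;
  opref : car -> car -> car;
  oD    : car -> car;
  oA    : car -> car
}.

Definition pfun (X : Type) := X -> option X.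

Definition spec_res {X} (f g h : pfun X) : Prop :=
  forall x y, h x = Some y <-> (g x = Some y /\ f x = None).
Definition spec_comp {X} (f g h : pfun X) : Prop :=
  forall x z, h x = Some z <-> (exists y, f x = Some y /\ g y = Some z).
Definition spec_meet {X} (f g h : pfun X) : Prop :=
  forall x y, h x = Some y <-> (f x = Some y /\ g x = Some y).
Definition spec_upd {X} (f g h : pfun X) : Prop :=
  forall x y, h x = Some y <->
    ((f x = Some y /\ g x = None) \/ (f x <> None /\ g x = Some y)).
Definition spec_pref {X} (f g h : pfun X) : Prop :=
  forall x y, h x = Some y <-> (f x = Some y \/ (f x = None /\ g x = Some y)).
Definition spec_D {X} (f h : pfun X) : Prop :=
  forall x y, h x = Some y <-> (y = x /\ f x <> None).
Definition spec_A {X} (f h : pfun X) : Prop :=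
  forall x y, h x = Some y <-> (y = x /\ f x = None).

Definition representation (sigma : sym -> Prop) (A : alg) (X : Type)
    (theta : A -> pfun X) : Prop :=
  (forall a b : A, theta a = theta b -> a = b) /\
  (sigma SRes  -> forall a b, spec_res  (theta a) (theta b) (theta (ores  A a b))) /\
  (sigma SComp -> forall a b, spec_comp (theta a) (theta b) (theta (ocomp A a b))) /\
  (sigma SMeet -> forall a b, spec_meet (theta a) (theta b) (theta (omeet A a b))) /\
  (sigma SUpd  -> forall a b, spec_upd  (theta a) (theta b) (theta (oupd  A a b))) /\
  (sigma SPref -> forall a b, spec_pref (theta a) (theta b) (theta (opref A a b))) /\
  (sigma SD    -> forall a, spec_D (theta a) (theta (oD A a))) /\
  (sigma SA    -> forall a, spec_A (theta a) (theta (oA A a))).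

(* 0 := a |> a ;  a <| b := (a |> b) |> b ;  a <= b :<-> a <| b = a *)
Definition alg_le (A : alg) (a b : A) : Prop := ores A (ores A a b) b = a.

Definition atom (A : alg) (a : A) : Prop :=
  a <> ores A a a /\
  forall b : A, alg_le A b a -> b = ores A a a \/ b = a.

Definition atomic (A : alg) (X : Type) (theta : A -> pfun X) : Prop :=
  forall (a : A) (x y : X), theta a x = Some y ->
    exists b : A, atom A b /\ alg_le A b a /\ theta b x = Some y.

Definition is_join_below (A : alg) (a : A) (S : A -> Prop) (c : A) : Prop :=
  alg_le A c a /\ (forall s, S s -> alg_le A s c) /\
  (forall d, alg_le A d a -> (forall s, S s -> alg_le A s d) -> alg_le A c d).

Definition is_meet_below (A : alg) (a : A) (S : A -> Prop) (c : A) : Prop :=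
  alg_le A c a /\ (forall s, S s -> alg_le A c s) /\
  (forall d, alg_le A d a -> (forall s, S s -> alg_le A d s) -> alg_le A d c).

Definition locally_complete (A : alg) (X : Type) (theta : A -> pfun X) : Prop :=
  forall a : A,
    (forall (S : A -> Prop) (c : A),
        (forall s, S s -> alg_le A s a) -> is_join_below A a S c ->
        forall x y, theta c x = Some y <-> exists s, S s /\ theta s x = Some y) /\
    (forall (S : A -> Prop) (c : A),
        (forall s, S s -> alg_le A s a) -> (exists s, S s) ->
        is_meet_below A a S c ->
        forall x y, theta c x = Some y <-> forall s, S s -> theta s x = Some y).

From Stdlib Require Import Classical FunctionalExtensionality.

(* From
   these, a <= b (i.e. (a |> b) |> b = a) means theta a is contained in
   theta b, and 0 = e |> e is the unique element with empty image.

   (=>) Given an atom b below some ambient element, any s below the same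
   element either lies above b or has domain disjoint from b.  For a join c
   of S, if a pair (x,y) of theta c lies in no theta s, an atom b <= c
   containing it gives the smaller upper bound b |> c; for a meet, an atom
   containing a common pair lies below every member of S, hence below c.

   (<=) Fix (x,y) in theta a and let S be the relative complements d |> a of
   the d <= a containing (x,y).  An upper bound d of S in (down a) either
   lies above a, or d |> a is an atom containing (x,y) (it is a least such
   element, and least witnesses are atoms).  So if no atom works, a is the
   join of S, and local completeness puts (x,y) into some d |> a: absurd. *)

Definition included {X : Type} (f g : pfun X) : Prop :=
  forall x y, f x = Some y -> g x = Some y.

Section RestrictionRepresentation.

Variables (A : alg) (X : Type) (theta : A -> pfun X).
Hypothesis theta_inj : forall a b : A, theta a = theta b -> a = b.
Hypothesis theta_res :
  forall a b : A, spec_res (theta a) (theta b) (theta (ores A a b)).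

Local Infix "|>" := (ores A) (at level 40, left associativity).
Local Infix "<=" := (alg_le A).

Lemma theta_resE (a b : A) (x : X) :
  theta (a |> b) x = match theta a x with Some _ => None | None => theta b x end.
Proof.
  destruct (theta (a |> b) x) as [y|] eqn:E.
  - apply theta_res in E as [Eb Ea]. now rewrite Ea.
  - destruct (theta a x) eqn:Ea; [reflexivity|].
    destruct (theta b x) as [y|] eqn:Eb; [|reflexivity].
    assert (theta (a |> b) x = Some y) by (apply theta_res; auto). congruence.
Qed.

Lemma le_included (a b : A) : a <= b <-> included (theta a) (theta b).
Proof.
  unfold alg_le, included. split.
  - intros H x y Hx. rewrite <- H, !theta_resE in Hx.
    destruct (theta a x), (theta b x); congruence.
  - intros H. apply theta_inj, functional_extensionality. intros x.
    rewrite !theta_resE. destruct (theta a x) eqn:Ea.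
    + rewrite (H _ _ Ea). reflexivity.
    + destruct (theta b x); reflexivity.
Qed.

Lemma le_apply (a b : A) (x y : X) : a <= b -> theta a x = Some y -> theta b x = Some y.
Proof. intros H. exact (proj1 (le_included a b) H x y). Qed.

Lemma le_trans (a b c : A) : a <= b -> b <= c -> a <= c.
Proof.
  rewrite !le_included. intros Hab Hbc x y Hx. exact (Hbc _ _ (Hab _ _ Hx)).
Qed.

Lemma res_le (b a : A) : b |> a <= a.
Proof.
  apply le_included. intros x y. rewrite theta_resE.
  destruct (theta b x); congruence.
Qed.

Lemma theta_zero (e : A) (x : X) : theta (e |> e) x = None.
Proof. rewrite theta_resE. destruct (theta e x); reflexivity. Qed.

Lemma empty_is_zero (b e : A) : (forall x, theta b x = None) -> b = e |> e.
Proof.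
  intros H. apply theta_inj, functional_extensionality. intros x.
  now rewrite H, theta_zero.
Qed.

Lemma atom_dichotomy (b s c : A) :
  atom A b -> b <= c -> s <= c ->
  b <= s \/ (forall u, theta b u <> None -> theta s u = None).
Proof.
  intros [_ Hmin] Hbc Hsc.
  destruct (Hmin ((s |> b) |> b) (res_le _ _)) as [Z|Z].
  - right. intros u Hu. pose proof (theta_zero b u) as Zu.
    rewrite <- Z, !theta_resE in Zu.
    destruct (theta s u), (theta b u); congruence.
  - left. apply le_included. intros u v Hv.
    assert (Hr := Hv). rewrite <- Z, !theta_resE, Hv in Hr.
    destruct (theta s u) as [w|] eqn:Es; [|discriminate].
    pose proof (le_apply _ _ _ _ Hbc Hv). pose proof (le_apply _ _ _ _ Hsc Es).
    congruence.
Qed.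

Lemma atomic_join_union (a : A) (S : A -> Prop) (c : A) (x y : X) :
  atomic A X theta -> is_join_below A a S c -> theta c x = Some y ->
  exists s, S s /\ theta s x = Some y.
Proof.
  intros Hat [Hca [Hup Hleast]] Hc.
  destruct (Hat c x y Hc) as [b [Hb [Hbc Hbx]]].
  apply NNPP. intros Hnone.
  assert (Hdisj : forall s, S s -> forall u, theta b u <> None -> theta s u = None).
  { intros s Hs. destruct (atom_dichotomy b s c Hb Hbc (Hup s Hs)) as [Hbs|Hd].
    - exfalso. apply Hnone. exists s. split; [exact Hs|]. exact (le_apply _ _ _ _ Hbs Hbx).
    - exact Hd. }
  assert (Hcb : c <= b |> c).
  { apply Hleast.
    - exact (le_trans _ _ _ (res_le b c) Hca).
    - intros s Hs. apply le_included. intros u v Hv. rewrite theta_resE.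
      destruct (theta b u) eqn:Eb.
      + rewrite (Hdisj s Hs u) in Hv; congruence.
      + exact (le_apply _ _ _ _ (Hup s Hs) Hv). }
  pose proof (le_apply _ _ _ _ Hcb Hc) as Hx.
  rewrite theta_resE, Hbx in Hx. discriminate.
Qed.

Lemma atomic_meet_intersection (a : A) (S : A -> Prop) (c : A) (x y : X) :
  atomic A X theta -> (forall s, S s -> s <= a) -> (exists s, S s) ->
  is_meet_below A a S c -> (forall s, S s -> theta s x = Some y) ->
  theta c x = Some y.
Proof.
  intros Hat HS [s0 Hs0] [_ [_ Hgreat]] Hall.
  assert (Hax : theta a x = Some y) by exact (le_apply _ _ _ _ (HS s0 Hs0) (Hall s0 Hs0)).
  destruct (Hat a x y Hax) as [b [Hb [Hba Hbx]]].
  apply (le_apply b c); [|exact Hbx].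
  apply Hgreat; [exact Hba|]. intros s Hs.
  destruct (atom_dichotomy b s a Hb Hba (HS s Hs)) as [Hbs|Hd]; [exact Hbs|].
  exfalso. pose proof (Hall s Hs) as Hsx. rewrite (Hd x) in Hsx; congruence.
Qed.

Lemma least_witness_atom (m : A) (x y : X) :
  theta m x = Some y ->
  (forall f, f <= m -> theta f x = Some y -> m <= f) -> atom A m.
Proof.
  intros Hmx Hleast. split.
  - intros Z. rewrite Z, theta_zero in Hmx. discriminate.
  - intros f Hfm. destruct (theta f x) as [w|] eqn:Efx.
    + right. assert (w = y) by (pose proof (le_apply _ _ _ _ Hfm Efx); congruence).
      subst w. apply theta_inj, functional_extensionality. intros u.
      destruct (theta f u) as [v|] eqn:Efu.
      * symmetry. exact (le_apply _ _ _ _ Hfm Efu).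
      * destruct (theta m u) as [v|] eqn:Emu; [|reflexivity].
        apply (le_apply _ _ _ _ (Hleast f Hfm Efx)) in Emu. congruence.
    + left. apply empty_is_zero. intros u.
      destruct (theta f u) as [v|] eqn:Efu; [|reflexivity].
      assert (Hc : theta (f |> m) x = Some y) by (rewrite theta_resE, Efx; exact Hmx).
      pose proof (le_apply _ _ _ _ (Hleast _ (res_le f m) Hc) (le_apply _ _ _ _ Hfm Efu))
        as Hu.
      rewrite theta_resE, Efu in Hu. discriminate.
Qed.

Definition complements_of_witnesses (a : A) (x y : X) (e : A) : Prop :=
  exists d, d <= a /\ theta d x = Some y /\ e = d |> a.

Lemma complement_bound_dichotomy (a d : A) (x y : X) :
  theta a x = Some y -> d <= a ->
  (forall e, complements_of_witnesses a x y e -> e <= d) ->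
  a <= d \/ (atom A (d |> a) /\ theta (d |> a) x = Some y).
Proof.
  intros Hax Hda Hup.
  assert (Hcompl : forall f u v, f <= a -> theta f x = Some y ->
                   theta f u = None -> theta a u = Some v -> theta d u = Some v).
  { intros f u v Hfa Hfx Hfu Hau. apply (le_apply (f |> a)).
    - apply Hup. exists f. auto.
    - rewrite theta_resE, Hfu. exact Hau. }
  destruct (theta d x) as [w|] eqn:Edx.
  - left. assert (w = y) by (pose proof (le_apply _ _ _ _ Hda Edx); congruence).
    subst w. apply le_included. intros u v Hau.
    destruct (theta d u) as [v'|] eqn:Edu.
    + pose proof (le_apply _ _ _ _ Hda Edu). congruence.
    + pose proof (Hcompl d u v Hda Edx Edu Hau). congruence.
  - right. assert (Hx : theta (d |> a) x = Some y) by (rewrite theta_resE, Edx; exact Hax).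
    split; [|exact Hx].
    apply (least_witness_atom _ x y Hx). intros f Hf Hfx.
    apply le_included. intros u v Hu.
    assert (Hdu : theta d u = None) by (rewrite theta_resE in Hu; destruct (theta d u); congruence).
    destruct (theta f u) as [v'|] eqn:Efu.
    + pose proof (le_apply _ _ _ _ Hf Efu). congruence.
    + pose proof (Hcompl f u v (le_trans _ _ _ Hf (res_le d a)) Hfx Efu
                    (le_apply _ _ _ _ (res_le d a) Hu)). congruence.
Qed.

Lemma locally_complete_atomic :
  locally_complete A X theta -> atomic A X theta.
Proof.
  intros Hlc a x y Hax. apply NNPP. intros Hno.
  set (S := complements_of_witnesses a x y).
  assert (HS : forall e, S e -> e <= a) by (intros e [d [_ [_ ->]]]; apply res_le).
  assert (Hjoin : is_join_below A a S a).
  { split; [apply le_included; intros u v Hu; exact Hu|]. split; [exact HS|].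
    intros d Hda Hd.
    destruct (complement_bound_dichotomy a d x y Hax Hda Hd) as [Had|[Hat Hx]];
      [exact Had|].
    exfalso. apply Hno. exists (d |> a). auto using res_le. }
  destruct (proj1 (proj1 (Hlc a) S a HS Hjoin x y) Hax) as [e [[d [_ [Hdx ->]]] He]].
  rewrite theta_resE, Hdx in He. discriminate.
Qed.

Lemma atomic_locally_complete :
  atomic A X theta -> locally_complete A X theta.
Proof.
  intros Hat a. split.
  - intros S c _ Hjoin x y. split.
    + exact (atomic_join_union a S c x y Hat Hjoin).
    + intros [s [Hs Hsx]]. exact (le_apply _ _ _ _ (proj1 (proj2 Hjoin) s Hs) Hsx).
  - intros S c HS Hne Hmeet x y. split.
    + intros Hc s Hs. exact (le_apply _ _ _ _ (proj1 (proj2 Hmeet) s Hs) Hc).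
    + exact (atomic_meet_intersection a S c x y Hat HS Hne Hmeet).
Qed.

End RestrictionRepresentation.

Theorem proposition4p4 (sigma : sym -> Prop) (A : alg) (X : Type)
    (theta : A -> pfun X) :
  sigma SRes -> representation sigma A X theta ->
  (atomic A X theta <-> locally_complete A X theta).
Proof.
  intros Hres [Hinj [Hspec _]].
  split.
  - exact (atomic_locally_complete A X theta Hinj (Hspec Hres)).
  - exact (locally_complete_atomic A X theta Hinj (Hspec Hres)).
Qed.
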